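(* Let $N<M$ be positive integers and $p=1/M$. Let $k,\lambda$ be non-negative integers with $k+\lambda+1<M$. Then $$P_{\lambda}(A_{N,p}=k)=(\lambda+1)\binom{N}{k}p^k\bigl(1-(k+1+\lambda)p\bigr)^{N-k}(k+1+\lambda)^{k-1},$$ and $$P\bigl(A_{N,p}(T_\lambda(\omega))=k,\ Y_M(\omega)=0\bigr)=\lambda\binom{N}{k}p^k\bigl(1-(k+1+\lambda)p\bigr)^{N-k}(k+\lambda)^{k-1}.$$
   Context: A configuration $\omega$ of the $(N,p)$ BB space is an assignment to each neuron $j\in\{1,\dots,N\}$ of an energy level $E_j(\omega)\in\{1,\dots,M\}$ (equivalently a $0/1$ matrix $(a_{i,j})_{i\le M,j\le N}$ with exactly one $1$ in each column, $a_{i,j}=1$ iff $E_j=i$). Let $Y_i(\omega)=\#\{j: E_j(\omega)=i\}$. The avalanche size is $A_{N,p}(\omega)=\inf\{i\ge 0:\ \sum_{j=M-i}^{M}Y_j(\omega)\le i\}$. The uniform measure $P$ makes the levels $E_1,\dots,E_N$ i.i.d. uniform on $\{1,\dots,M\}$. For an integer $\lambda\ge0$, the map $T_\lambda$ on configurations is defined by: if $E_j(\omega)\ge M-\lambda$ then $E_j(T_\lambda(\omega))=M$; if $E_j(\omega)<M-\lambda$ then $E_j(T_\lambda(\omega))=E_j(\omega)+\lambda$. $P_\lambda$ is the pushforward of $P$ under $T_\lambda$. *)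

From mathcomp Require Import all_boot all_order all_algebra.
Set Implicit Arguments. Unset Strict Implicit. Unset Printing Implicit Defensive.
Import Order.TTheory GRing.Theory Num.Theory.

(* A configuration of the (N,p) BB space, p = 1/M: neuron j : 'I_N gets
   level (val (w j)).+1 in {1,..,M}. *)
Definition config (N M : nat) := {ffun 'I_N -> 'I_M}.

Definition level (N M : nat) (w : config N M) : 'I_N -> nat :=
  fun j => (val (w j)).+1.

Definition Ycount (N : nat) (E : 'I_N -> nat) (i : nat) : nat :=
  #|[pred j | E j == i]|.

(* A = inf { i >= 0 : sum_{j = M-i}^{M} Y_j <= i }.  The predicate always holds
   at i = N (the sum counts distinct neurons), so the inf is the first i in
   0..N satisfying it. *)
Definition aval_pred (N M : nat) (E : 'I_N -> nat) (i : nat) : bool :=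
  (\sum_(M - i <= j < M.+1) Ycount E j <= i)%N.

Definition avalanche (N M : nat) (E : 'I_N -> nat) : nat :=
  find (aval_pred M E) (iota 0 N.+1).

Definition Tlam (N M lam : nat) (E : 'I_N -> nat) : 'I_N -> nat :=
  fun j => if (M - lam <= E j)%N then M else (E j + lam)%N.

Definition Prob (N M : nat) (ev : pred (config N M)) : rat :=
  (#|ev|%:R / #|{: config N M}|%:R)%R.

From mathcomp Require Import all_boot all_order all_algebra zify ring.
Set Implicit Arguments. Unset Strict Implicit. Unset Printing Implicit Defensive.

(* Write [d_j = M - E_j] for the depth of neuron [j] below the top level.  After
   [T_lam], the avalanche is the least [i] with [#{j | d_j < i + lam + 1} <= i],
   so [A = k] exactly when [k] depths lie below [k + lam + 1] and form a
   (lam+1)-parking sequence, the other [N - k] depths being arbitrary in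
   [[k + lam + 1, M)].  Parking sequences of length [k] with offset [x] are
   counted by the Abel number [x (k + x)^(k-1)] (remove the zero entries and
   recurse), which gives [C(N,k) (M - k - lam - 1)^(N-k) (lam+1) (k+lam+1)^(k-1)]
   configurations.  Asking moreover [Y_M = 0] forbids depth [0]; shifting all
   depths down by one turns the condition into the [lam]-parking one, whence
   the factor [lam (k+lam)^(k-1)]. *)

Section WordSums.

Variable T : Type.

Fixpoint sum_words (S : seq T) (n : nat) (f : seq T -> nat) : nat :=
  if n is n'.+1 then \sum_(v <- S) sum_words S n' (fun s => f (v :: s))
  else f [::].

Lemma sum_wordsS S n f :
  sum_words S n.+1 f = \sum_(v <- S) sum_words S n (fun s => f (v :: s)).
Proof. by []. Qed.

Lemma eq_sum_words S n f g :
  (forall s, size s = n -> f s = g s) -> sum_words S n f = sum_words S n g.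
Proof.
elim: n f g => [|n IHn] f g fg /=; first exact: fg.
by apply: eq_bigr => v _; apply: IHn => s sz_s; apply: fg; rewrite /= sz_s.
Qed.

Lemma sum_words_eq0 S n f :
  (forall s, size s = n -> f s = 0) -> sum_words S n f = 0.
Proof.
elim: n f => [|n IHn] f f0 /=; first exact: f0.
by rewrite big1 // => v _; apply: IHn => s sz_s; apply: f0; rewrite /= sz_s.
Qed.

Lemma sum_words_const S n c : sum_words S n (fun=> c) = size S ^ n * c.
Proof.
elim: n => [|n IHn] /=; first by rewrite mul1n.
by rewrite big_const_seq count_predT iter_addn_0 IHn expnS; lia.
Qed.

Lemma sum_words_sum S n m (f : 'I_m -> seq T -> nat) :
  sum_words S n (fun s => \sum_(a < m) f a s) = \sum_(a < m) sum_words S n (f a).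
Proof.
elim: n f => [|n IHn] f //=.
by under eq_bigr do rewrite (IHn (fun a s => f a (_ :: s))); rewrite exchange_big.
Qed.

Lemma sum_words_count S n (r : pred T) f :
  sum_words S n f = \sum_(a < n.+1) sum_words S n (fun s => (count r s == a) * f s).
Proof.
rewrite -sum_words_sum; apply: eq_sum_words => s sz_s.
have lt_cnt : count r s < n.+1 by rewrite ltnS -sz_s count_size.
rewrite (bigD1 (Ordinal lt_cnt)) //= eqxx mul1n big1 ?addn0 // => a.
by rewrite -val_eqE /= eq_sym => /negbTE ->.
Qed.

(* Choosing which [a] of the [n] letters satisfy [r] accounts for the binomial. *)
Lemma sum_words_split S n (r : pred T) a (P Q : seq T -> nat) f :
  (forall s, f s = (count r s == a) * (P (filter r s) * Q (filter (predC r) s))) ->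
  sum_words S n f
  = 'C(n, a) * sum_words (filter r S) a P * sum_words (filter (predC r) S) (n - a) Q.
Proof.
move=> fE; rewrite (eq_sum_words _ (fun s _ => fE s)) {f fE}.
elim: n a P Q => [|n IHn] a P Q.
  by case: a => [|a] /=; [rewrite bin0 mulnA | rewrite mul0n bin0n].
set F := fun s => _; rewrite sum_wordsS (bigID r).
have -> : \sum_(v <- S | ~~ r v) sum_words S n (fun s => F (v :: s))
    = 'C(n, a) * sum_words (filter r S) a P * sum_words (filter (predC r) S) (n - a).+1 Q.
  rewrite sum_wordsS big_distrr /= big_filter; apply: eq_bigr => v /negbTE nrv.
  by rewrite -IHn; apply: eq_sum_words => s _; rewrite /F /= nrv.
case: a @F => [|a] F.
  rewrite big1 ?add0n ?bin0 ?subn0 // => v /= rv.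
  by apply: sum_words_eq0 => s _; rewrite /F /= rv.
have -> : \sum_(v <- S | r v) sum_words S n (fun s => F (v :: s))
    = 'C(n, a) * sum_words (filter r S) a.+1 P * sum_words (filter (predC r) S) (n - a) Q.
  rewrite sum_wordsS big_distrr big_distrl /= big_filter; apply: eq_bigr => v rv.
  by rewrite -IHn; apply: eq_sum_words => s _; rewrite /F /= rv.
rewrite binS subSS; case: (ltnP a n) => [lt_an | le_na].
  by rewrite subnSK //= !mulnDl addnC.
by rewrite (@bin_small n a.+1) ?ltnS //= !mul0n addn0.
Qed.

End WordSums.

Lemma sum_words_map (U T : Type) (g : U -> T) S n (f : seq T -> nat) :
  sum_words (map g S) n f = sum_words S n (fun s => f (map g s)).
Proof.
elim: n f => [|n IHn] f //=.
by rewrite big_map; apply: eq_bigr => v _; exact: IHn.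
Qed.

Lemma perm_sum_words (T : eqType) (S S' : seq T) n f :
  perm_eq S S' -> sum_words S n f = sum_words S' n f.
Proof.
move=> eq_SS'; elim: n f => [|n IHn] f //=.
by rewrite (perm_big _ eq_SS'); apply: eq_bigr => v _; exact: IHn.
Qed.

Lemma card_indicator_sum (T : finType) (A : pred T) : #|A| = \sum_(t : T) A t.
Proof.
by rewrite -sum1_card big_mkcond; apply: eq_bigr => t _; rewrite unfold_in; case: (A t).
Qed.

Lemma card_tuple_words (T : finType) n (P : pred (seq T)) :
  #|[pred t : n.-tuple T | P t]| = sum_words (enum T) n P.
Proof.
elim: n P => [|n IHn] P; rewrite card_indicator_sum.
  rewrite (eq_bigr (fun=> P [::] : nat)) => [|t _]; last by rewrite tuple0.
  by rewrite sum_nat_const card_tuple mul1n.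
rewrite (reindex (fun p : T * n.-tuple T => [tuple of p.1 :: p.2])) /=; last first.
  exists (fun t : n.+1.-tuple T => (thead t, [tuple of behead t])).
    by move=> [v t] _; congr (_, _); apply: val_inj.
  by move=> t _; apply: val_inj; rewrite /= [in RHS](tuple_eta t).
rewrite -(pair_big predT predT (fun v (t : n.-tuple T) => P (v :: t) : nat)) /=.
rewrite big_enum; apply: eq_big => [v | v _]; first by rewrite inE.
by rewrite -(IHn (fun s => P (v :: s))) card_indicator_sum.
Qed.

Lemma card_ffun_words (aT rT : finType) (P : pred (seq rT)) :
  #|[pred w : {ffun aT -> rT} | P (codom w)]| = sum_words (enum rT) #|aT| P.
Proof.
rewrite -card_tuple_words [LHS]card_indicator_sum [RHS]card_indicator_sum.
rewrite (reindex (@Finfun aT rT)) /=; last first.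
  by exists fgraph => [t _ | w _]; rewrite ?FinfunK ?fgraphK.
by apply: eq_bigr => t _; rewrite codom_ffun FinfunK.
Qed.

(* Equivalently, the increasing rearrangement [b] of [s] satisfies [b_i < i + x];
   for [x = 1] these are the classical parking functions. *)
Definition parking (x : nat) (s : seq nat) : bool :=
  all (fun i => i < count (fun v => v < i + x) s) (iota 0 (size s)).

Definition parking_number (n x : nat) : nat :=
  if n is m.+1 then x * (n + x) ^ m else 1.

Definition decr_nonzero (s : seq nat) : seq nat := map predn (filter (predC (pred1 0)) s).

Lemma size_decr_nonzero s : size (decr_nonzero s) = size s - count (pred1 0) s.
Proof. by rewrite size_map size_filter -(count_predC (pred1 0) s) addKn. Qed.

Lemma count_ltnS_decr c s :
  count (fun v => v < c.+1) s = count (pred1 0) s + count (fun v => v < c) (decr_nonzero s).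
Proof.
rewrite /decr_nonzero; elim: s => [|[|v] s IHs] //=.
  by rewrite IHs addnA.
by rewrite IHs ltnS add0n addnCA.
Qed.

(* Zero entries meet every constraint at once, so they can be dropped, the other
   entries shifted down by one, and the offset raised by their number. *)
Lemma parkingS x s :
  parking x.+1 s = parking (x + count (pred1 0) s) (decr_nonzero s).
Proof.
rewrite /parking size_decr_nonzero; set z := count (pred1 0) s.
have le_zs : z <= size s by exact: count_size.
apply/allP/allP => ok i; rewrite !mem_iota !add0n => /andP[_ lt_i].
  have := ok (i + z); rewrite mem_iota => /(_ ltac:(lia)).
  have -> : i + z + x.+1 = (i + (x + z)).+1 by lia.
  by rewrite count_ltnS_decr -/z; lia.
rewrite addnS count_ltnS_decr -/z.
have [lt_iz | le_zi] := ltnP i z; first by lia.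
have := ok (i - z); rewrite mem_iota => /(_ ltac:(lia)).
have -> : i - z + (x + z) = i + x by lia.
lia.
Qed.

Lemma sum_bin_pow n B : \sum_(a < n.+1) 'C(n, a) * B ^ (n - a) = (B + 1) ^ n.
Proof. by rewrite expnDn; apply: eq_bigr => a _; rewrite exp1n muln1. Qed.

Lemma sum_mul_bin_pow n B :
  \sum_(a < n.+2) a * 'C(n.+1, a) * B ^ (n.+1 - a) = n.+1 * (B + 1) ^ n.
Proof.
rewrite big_ord_recl mul0n add0n -sum_bin_pow big_distrr; apply: eq_bigr => a _.
by rewrite lift0 subSS -mul_bin_diag -mulnA.
Qed.

(* Abel's identity in recursive form: multiplying by [n + x] reduces it to the
   two binomial sums above. *)
Lemma parking_numberS n x :
  parking_number n x.+1 = \sum_(a < n.+1) 'C(n, a) * parking_number (n - a) (x + a).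
Proof.
case: n => [|m]; first by rewrite big_ord1.
set n := m.+1; set B := n + x.
apply/eqP; rewrite -(@eqn_pmul2l B) ?addn_gt0 //; apply/eqP.
have termE (a : 'I_n.+1) : B * ('C(n, a) * parking_number (n - a) (x + a))
    = x * ('C(n, a) * B ^ (n - a)) + a * 'C(n, a) * B ^ (n - a).
  have [lt_an | ge_an] := ltnP a n; last first.
    have -> : a = n :> nat by apply/eqP; rewrite eqn_leq ge_an -ltnS ltn_ord.
    by rewrite subnn binn expn0 /B /=; lia.
  have -> : n - a = (n - a).-1.+1 by lia.
  rewrite /parking_number; have -> : (n - a).-1.+1 + (x + a) = B by rewrite /B; lia.
  by rewrite expnS; lia.
rewrite big_distrr (eq_bigr _ (fun a _ => termE a)) big_split -big_distrr /=.
rewrite sum_bin_pow sum_mul_bin_pow /= expnS.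
have -> : m.+1 + x.+1 = B + 1 by rewrite /B /n; lia.
by rewrite /B /n; set P := (_ + 1) ^ m; nia.
Qed.

Lemma filter0_iota B : filter (pred1 0) (iota 0 B.+1) = [:: 0].
Proof.
by rewrite /= -(@eq_in_filter _ pred0) ?filter_pred0 // => v; rewrite mem_iota; case: v.
Qed.

Lemma filterC0_iota B : filter (predC (pred1 0)) (iota 0 B.+1) = map succn (iota 0 B).
Proof.
rewrite /= -(iotaDl 1 0); apply/all_filterP/allP => v.
by rewrite mem_iota; case: v.
Qed.

Lemma sum_words_parking n x B :
  n + x <= B.+1 -> sum_words (iota 0 B) n (parking x) = parking_number n x.
Proof.
elim/ltn_ind: n x B => -[|n] IHn x B le_nxB //.
elim: x B le_nxB => [|x IHx] B le_nxB.
  apply: sum_words_eq0 => s sz_s; rewrite /parking sz_s /=.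
  by rewrite (@eq_count _ _ pred0) ?count_pred0 // => v; rewrite addn0 ltn0.
case: B le_nxB => [|B] le_nxB; first lia.
rewrite (sum_words_count _ _ (pred1 0)) parking_numberS; apply: eq_bigr => a _.
rewrite (@sum_words_split nat _ _ (pred1 0) a (fun=> 1) (fun t => parking (x + a) (map predn t)));
  last first.
  by move=> s; rewrite parkingS /decr_nonzero; case: eqP => [->|]; rewrite ?mul1n.
rewrite filter0_iota filterC0_iota sum_words_const exp1n !muln1 sum_words_map.
rewrite (@eq_sum_words _ _ _ _ (parking (x + a))) => [|t _]; last by rewrite (mapK succnK).
by case: a => -[|a] lt_an; [rewrite subn0 addn0 IHx | rewrite IHn]; rewrite //=; lia.
Qed.

Definition first_stop (x k : nat) (s : seq nat) : bool :=
  (count (fun d => d < k + x) s <= k) &&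
  all (fun i => i < count (fun d => d < i + x) s) (iota 0 k).

Lemma count_filter_ltn x k i s : i <= k ->
  count (fun d => d < i + x) (filter (fun d => d < k + x) s)
  = count (fun d => d < i + x) s.
Proof.
move=> le_ik; rewrite count_filter; apply: eq_count => d /=.
by case: ltnP => //= lt_d; apply: leq_trans lt_d _; rewrite leq_add2r.
Qed.

Lemma first_stopE x k s : first_stop x k s =
  (count (fun d => d < k + x) s == k) && parking x (filter (fun d => d < k + x) s).
Proof.
rewrite /first_stop /parking size_filter.
have allE : all (fun i => i < count (fun d => d < i + x) s) (iota 0 k)
    = all (fun i => i < count (fun d => d < i + x) (filter (fun d => d < k + x) s)) (iota 0 k).
  by apply: eq_in_all => i; rewrite mem_iota => /andP[_ lt_ik]; rewrite count_filter_ltn // ltnW.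
apply/andP/andP => [[le_ck ok] | [/eqP eq_ck ok]]; last by move: ok; rewrite eq_ck allE.
have eq_ck : count (fun d => d < k + x) s = k.
  case: k le_ck ok {allE} => [|k] le_ck ok; first lia.
  have := allP ok k; rewrite mem_iota ltnSn => /(_ isT).
  have : count (fun d => d < k + x) s <= count (fun d => d < k.+1 + x) s.
    by apply: sub_count => d /= lt_d; apply: leq_trans lt_d _; rewrite leq_add2r.
  lia.
by rewrite eq_ck -allE.
Qed.

Lemma filter_iota0_ltn c B : c <= B -> filter (fun d => d < c) (iota 0 B) = iota 0 c.
Proof. by move=> le_cB; rewrite -(filter_iota_ltn 0 le_cB). Qed.

Lemma size_filter_geq_iota c B : c <= B ->
  size (filter (predC (fun d => d < c)) (iota 0 B)) = B - c.
Proof.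
move=> le_cB; rewrite size_filter.
have := count_predC (fun d => d < c) (iota 0 B).
by rewrite -size_filter filter_iota0_ltn // !size_iota; lia.
Qed.

Lemma sum_words_first_stop N x k B : k + x <= B ->
  sum_words (iota 0 B) N (first_stop x k)
  = 'C(N, k) * (B - (k + x)) ^ (N - k) * parking_number k x.
Proof.
move=> le_kxB.
rewrite (@sum_words_split nat _ _ (fun d => d < k + x) k (parking x) (fun=> 1)); last first.
  by move=> s; rewrite first_stopE muln1 mulnb.
rewrite sum_words_const size_filter_geq_iota // muln1 (filter_iota0_ltn le_kxB).
by rewrite sum_words_parking ?leqnSn // mulnAC.
Qed.

Lemma first_stop_succ x k t : first_stop x.+1 k (map succn t) = first_stop x k t.
Proof.
rewrite /first_stop addnS count_map; congr andb.
by apply: eq_all => i; rewrite addnS count_map.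
Qed.

Lemma sum_words_first_stop_nonzero N x k B : k + x <= B ->
  sum_words (iota 0 B.+1) N (fun s => first_stop x.+1 k s && (count (pred1 0) s == 0))
  = 'C(N, k) * (B - (k + x)) ^ (N - k) * parking_number k x.
Proof.
move=> le_kxB.
rewrite (@sum_words_split nat _ _ (pred1 0) 0 (fun=> 1) (first_stop x.+1 k)); last first.
  move=> s; case: eqP => [no0 | _]; last by rewrite andbF.
  have /all_filterP -> : all (predC (pred1 0)) s by rewrite all_predC has_count no0.
  by rewrite andbT !mul1n.
rewrite bin0 sum_words_const filterC0_iota sum_words_map subn0 !mul1n.
rewrite (@eq_sum_words _ _ _ _ (first_stop x k)) => [|t _]; last by rewrite first_stop_succ.
exact: sum_words_first_stop.
Qed.

Lemma find_iota_eq (P : pred nat) N k : P N ->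
  (find P (iota 0 N.+1) == k) = P k && all (predC P) (iota 0 k).
Proof.
move=> PN; have hasP : has P (iota 0 N.+1) by apply/hasP; exists N; rewrite // mem_iota ltnSn.
have := hasP; rewrite has_find size_iota; set j := find P _ => lt_jN.
have Pj : P j by have := nth_find 0 hasP; rewrite nth_iota.
have notP i : i < j -> ~~ P i.
  by move=> lt_ij; have := before_find 0 lt_ij; rewrite nth_iota ?(ltn_trans lt_ij) // => ->.
apply/eqP/andP => [<- | [Pk /allP notPk]].
  by split; last by apply/allP => i; rewrite mem_iota => /andP[_ /notP].
case: (ltngtP j k) => // [lt_jk | lt_kj].
  by move: (notPk j); rewrite mem_iota /= Pj => /(_ lt_jk).
by have := notP k lt_kj; rewrite Pk.
Qed.

Lemma card_count (T : finType) (Q : pred T) : #|[pred x | Q x]| = count Q (enum T).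
Proof. by rewrite cardE -size_filter enumT /enum_mem. Qed.

Lemma sum_card_preim (I : finType) (E : I -> nat) (s : seq nat) : uniq s ->
  \sum_(j <- s) #|[pred n | E n == j]| = #|[pred n | E n \in s]|.
Proof.
move=> uniq_s; rewrite card_indicator_sum; under eq_bigr do rewrite card_indicator_sum.
rewrite exchange_big; apply: eq_bigr => n _ /=.
rewrite -count_uniq_mem // -sum1_count [RHS]big_mkcond /=.
by apply: eq_bigr => j _; rewrite eq_sym; case: eqP.
Qed.

Definition depths N M (w : config N M) : seq nat := [seq M - level w j | j <- enum 'I_N].

Lemma size_depths N M (w : config N M) : size (depths w) = N.
Proof. by rewrite size_map size_enum_ord. Qed.

Lemma aval_pred_depths N M lam (w : config N M) i :
  aval_pred M (Tlam M lam (level w)) i = (count (fun d => d < i + lam.+1) (depths w) <= i).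
Proof.
rewrite /aval_pred /Ycount sum_card_preim ?iota_uniq // card_count /depths [in RHS]count_map.
congr (_ <= _); apply: eq_count => j /=.
have lt_wM : val (w j) < M := ltn_ord (w j).
by rewrite mem_index_iota /Tlam /level; case: ifP => ?; lia.
Qed.

Lemma avalanche_Tlam_eq N M lam k (w : config N M) :
  (avalanche M (Tlam M lam (level w)) == k) = first_stop lam.+1 k (depths w).
Proof.
rewrite /avalanche (eq_find (aval_pred_depths lam w)) find_iota_eq.
  by rewrite /first_stop; congr andb; apply: eq_all => i /=; rewrite -ltnNge.
by apply: leq_trans (count_size _ _) _; rewrite size_depths.
Qed.

Lemma Ycount_top N M (w : config N M) : Ycount (level w) M = count (pred1 0) (depths w).
Proof.
rewrite /Ycount card_count /depths [in RHS]count_map; apply: eq_count => j /=.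
have lt_wM : val (w j) < M := ltn_ord (w j).
by rewrite /level; lia.
Qed.

Lemma perm_rev_enum_ord n : perm_eq (map (@rev_ord n) (enum 'I_n)) (enum 'I_n).
Proof.
apply: uniq_perm => [|| i]; rewrite ?(map_inj_uniq rev_ord_inj) ?enum_uniq //.
by rewrite -{1}(rev_ordK i) mem_map ?mem_enum //; exact: rev_ord_inj.
Qed.

Lemma card_depths N M (P : pred (seq nat)) :
  #|[pred w : config N M | P (depths w)]| = sum_words (iota 0 M) N P.
Proof.
pose Q s := P (map (fun i => val (@rev_ord M i)) s).
rewrite (@eq_card _ _ [pred w : config N M | Q (codom w)]);
  last by move=> w; rewrite !inE /Q codomE -map_comp.
rewrite (@card_ffun_words 'I_N 'I_M Q) card_ord -(sum_words_map _ _ _ P); apply: perm_sum_words.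
by rewrite map_comp -val_enum_ord perm_map // perm_rev_enum_ord.
Qed.

Lemma card_avalanche N M lam k : k + 1 + lam <= M ->
  #|(fun w : config N M => avalanche M (Tlam M lam (level w)) == k)|
  = 'C(N, k) * (M - (k + 1 + lam)) ^ (N - k) * parking_number k lam.+1.
Proof.
move=> le_kM; set P := first_stop lam.+1 k.
rewrite (@eq_card _ _ [pred w : config N M | P (depths w)]) => [|w]; last first.
  by rewrite !unfold_in /= avalanche_Tlam_eq.
by rewrite card_depths sum_words_first_stop ?addn1 ?addSn ?addnS //; lia.
Qed.

Lemma card_avalanche_top_empty N M lam k : k + 1 + lam <= M ->
  #|(fun w : config N M =>
      (avalanche M (Tlam M lam (level w)) == k) && (Ycount (level w) M == 0))|
  = 'C(N, k) * (M - (k + 1 + lam)) ^ (N - k) * parking_number k lam.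
Proof.
move=> le_kM; set P := fun s => first_stop lam.+1 k s && (count (pred1 0) s == 0).
rewrite (@eq_card _ _ [pred w : config N M | P (depths w)]) => [|w]; last first.
  by rewrite !unfold_in /= avalanche_Tlam_eq Ycount_top.
rewrite card_depths; case: M le_kM => [|M] le_kM; first lia.
rewrite sum_words_first_stop_nonzero; last lia.
by rewrite addnAC addn1 subSS.
Qed.

Import GRing.Theory Num.Theory.
Local Open Scope ring_scope.

Lemma ratio_binomial_pow (R : numFieldType) (N M k c m : nat) :
  (0 < M)%N -> (c <= M)%N ->
  ('C(N, k) * (M - c) ^ (N - k) * m)%:R / (M ^ N)%:R
  = 'C(N, k)%:R * M%:R^-1 ^+ k * (1 - c%:R * M%:R^-1) ^+ (N - k) * m%:R :> R.
Proof.
move=> M_gt0 le_cM; have M_neq0 : M%:R != 0 :> R by rewrite pnatr_eq0 -lt0n.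
have [le_kN | lt_Nk] := leqP k N; last by rewrite bin_small // !mul0n !mul0r.
have -> : 1 - c%:R * M%:R^-1 = (M - c)%:R / M%:R :> R by rewrite natrB //; field.
have -> : (M ^ N)%:R = M%:R ^+ k * M%:R ^+ (N - k) :> R.
  by rewrite -exprD subnKC // natrX.
rewrite !natrM natrX expr_div_n exprVn.
by field; rewrite !expf_neq0.
Qed.

Lemma parking_number_ratE (R : numFieldType) n x : (0 < x)%N ->
  (parking_number n x)%:R = x%:R * (n + x)%:R ^ (n%:Z - 1) :> R.
Proof.
move=> x_gt0; have x_neq0 : x%:R != 0 :> R by rewrite pnatr_eq0 -lt0n.
case: n => [|n] /=; first by rewrite sub0r exprN1 add0n mulfV.
have -> : n.+1%:Z - 1 = n by rewrite -addn1 PoszD addrK.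
by rewrite natrM natrX.
Qed.

Theorem mainTheorem1 (N M k lam : nat)
  (hN : (0 < N)%N) (hNM : (N < M)%N) (hk : (k + lam + 1 < M)%N) :
  let p : rat := (M%:R)^-1 in
  Prob (fun w : config N M => avalanche M (Tlam M lam (level w)) == k)
    = (lam.+1)%:R * ('C(N, k))%:R * p ^+ k
      * (1 - (k + 1 + lam)%:R * p) ^+ (N - k)
      * ((k + 1 + lam)%:R) ^ (k%:Z - 1)
  /\
  Prob (fun w : config N M =>
          (avalanche M (Tlam M lam (level w)) == k)
          && (Ycount (level w) M == 0%N))
    = ('C(N, k))%:R * p ^+ k
      * (1 - (k + 1 + lam)%:R * p) ^+ (N - k)
      * (if k == 0%N then 1 else lam%:R * ((k + lam)%:R) ^+ k.-1).
Proof.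
move=> p; have le_kM : (k + 1 + lam <= M)%N by lia.
have M_gt0 : (0 < M)%N by lia.
rewrite /Prob card_ffun !card_ord card_avalanche // card_avalanche_top_empty //.
rewrite !ratio_binomial_pow // parking_number_ratE //.
split; first by rewrite -[(k + 1 + lam)%N]addnA add1n; ring.
by case: k {hk le_kM} => [|k] //=; rewrite natrM natrX.
Qed.
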